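(* Let $m,n,P$ be positive integers with $P \ge mn+n-1$, let $N_1,N_0$ be positive integers with $m \mid N_1$ and $n \mid N_0$, and let $\bm{W} \in \mathbb{R}^{N_1 \times N_0}$ and $\bm{x} \in \mathbb{R}^{N_0}$. Consider the Generalized PolyDot scheme for computing $\bm{s}=\bm{W}\bm{x}$ with $P$ nodes defined in the context. Then the recovery threshold of this scheme is $mn+n-1$: from the computed outputs $\widetilde{\bm{s}}_p$ of any $mn+n-1$ of the $P$ nodes, the whole product $\bm{s}=\bm{W}\bm{x}$ can be recovered. Consequently, the scheme tolerates up to $P-mn-n+1$ erasures (nodes whose outputs are missing).
   Context: Block-partition $\bm{W}$ into an $m\times n$ grid of blocks $\bm{W}_{i,j}\in\mathbb{R}^{(N_1/m)\times(N_0/n)}$ ($i=0,\dots,m-1$, $j=0,\dots,n-1$), and partition $\bm{x}$ into $n$ consecutive sub-vectors $\bm{x}_j \in \mathbb{R}^{N_0/n}$; correspondingly $\bm{s}=\bm{W}\bm{x}$ splits into $m$ sub-vectors $\bm{s}_i=\sum_{j}\bm{W}_{i,j}\bm{x}_j$. Define the polynomials $\widetilde{\bm{W}}(u,v)=\sum_{i=0}^{m-1}\sum_{j=0}^{n-1}\bm{W}_{i,j}u^i v^j$ and $\widetilde{\bm{x}}(v)=\sum_{j=0}^{n-1}\bm{x}_j v^{n-1-j}$. Choose $P$ distinct real numbers $b_0,\dots,b_{P-1}$ and set $a_p=b_p^{\,n}$. Node $p$ ($p=0,\dots,P-1$) stores only $\widetilde{\bm{W}}(a_p,b_p)$ (an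 $\frac{N_1}{m}\times\frac{N_0}{n}$ matrix) and $\widetilde{\bm{x}}(b_p)$ (an $\frac{N_0}{n}$-vector) and computes $\widetilde{\bm{s}}_p=\widetilde{\bm{W}}(a_p,b_p)\widetilde{\bm{x}}(b_p)$. The recovery threshold is the number of node outputs, out of $P$, that a decoder needs (from any subset of nodes of that size) to recover $\bm{s}$. *)

From mathcomp Require Import all_boot all_order all_algebra.
Set Implicit Arguments. Unset Strict Implicit. Unset Printing Implicit Defensive.
Import Order.TTheory GRing.Theory Num.Theory.
Local Open Scope ring_scope.

Section PolyDot.
Variable R : ringType.

(* Entry of a matrix accessed by natural-number indices (0 when out of range;
   under the divisibility hypotheses all indices used below are in range). *)
Definition matE (N1 N0 : nat) (A : 'M[R]_(N1, N0)) (i j : nat) : R :=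
  match @insub _ (fun k => k < N1)%N 'I_N1 i, @insub _ (fun k => k < N0)%N 'I_N0 j with
  | Some i', Some j' => A i' j'
  | _, _ => 0
  end.

Definition vecE (N0 : nat) (v : 'cV[R]_N0) (j : nat) : R :=
  match @insub _ (fun k => k < N0)%N 'I_N0 j with
  | Some j' => v j' 0
  | None => 0
  end.

Definition Wblock (m n N1 N0 : nat) (W : 'M[R]_(N1, N0)) (i j r c : nat) : R :=
  matE W (i * (N1 %/ m) + r)%N (j * (N0 %/ n) + c)%N.

Definition xblock (n N0 : nat) (x : 'cV[R]_N0) (j c : nat) : R :=
  vecE x (j * (N0 %/ n) + c)%N.

Definition Wtilde (m n N1 N0 : nat) (W : 'M[R]_(N1, N0)) (u v : R)
  : 'M[R]_(N1 %/ m, N0 %/ n) :=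
  \matrix_(r, c) \sum_(i < m) \sum_(j < n) Wblock m n W i j r c * u ^+ i * v ^+ j.

Definition xtilde (n N0 : nat) (x : 'cV[R]_N0) (v : R) : 'cV[R]_(N0 %/ n) :=
  \col_c \sum_(j < n) xblock n x j c * v ^+ (n - 1 - j).

Definition node_out (m n N1 N0 : nat) (W : 'M[R]_(N1, N0)) (x : 'cV[R]_N0)
  (bp : R) : 'cV[R]_(N1 %/ m) :=
  Wtilde m n W (bp ^+ n) bp *m xtilde n x bp.

End PolyDot.

From mathcomp Require Import all_boot all_order all_algebra.
From mathcomp Require Import zify ring.
Import Order.TTheory GRing.Theory Num.Theory.
Set Implicit Arguments. Unset Strict Implicit. Unset Printing Implicit Defensive.
Local Open Scope ring_scope.

(* Entry r of the output of node p is the value at b_p of the polynomial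
   sum_c W~(X^n, X)_(r,c) x~(X)_c, whose monomials are X^(n i + j + (n-1-k))
   with i < m and j, k < n. Its size is at most mn + n - 1, and the exponent
   n i + n - 1 occurs only for j = k, so that coefficient is entry r of
   s_i = sum_j W_(i,j) x_j. Lagrange interpolation through any mn + n - 1 of
   the distinct points b_p recovers the polynomial, hence s. *)

Section LagrangeInterpolation.
Variables (F : fieldType) (I : finType) (A : {set I}) (x : I -> F).
Hypothesis x_inj : {in A &, injective x}.

Definition lagrange_interp (y : I -> F) : {poly F} :=
  \sum_(i in A) (y i / \prod_(j in A :\ i) (x i - x j))
                 *: \prod_(j in A :\ i) ('X - (x j)%:P).

Lemma eq_lagrange_interp y y' : {in A, y =1 y'} ->
  lagrange_interp y = lagrange_interp y'.
Proof. by move=> eq_y; apply: eq_bigr => i /eq_y ->. Qed.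

Lemma size_lagrange_interp y : (size (lagrange_interp y) <= #|A|)%N.
Proof.
apply: leq_trans (size_sum _ _ _) _; apply/bigmax_leqP => i Ai.
apply: leq_trans (size_scale_leq _ _) _.
rewrite -big_filter size_prod_XsubC size_filter -sum1_count sum1_card.
by rewrite (cardsD1 i A) Ai.
Qed.

Lemma horner_lagrange_interp y k : k \in A -> (lagrange_interp y).[x k] = y k.
Proof.
move=> Ak; rewrite horner_sum (bigD1 k) //= [X in _ + X]big1 => [|i /andP[Ai ik]].
  rewrite addr0 hornerZ horner_prod (eq_bigr _ (fun j _ => hornerXsubC _ _)).
  rewrite mulfVK //; apply/prodf_neq0 => j; rewrite in_setD1 => /andP[jk Aj].
  by rewrite subr_eq0; apply: contra jk => /eqP/x_inj-> //.
rewrite hornerZ horner_prod [X in _ * X](bigD1 k) /=; last by rewrite in_setD1 Ak eq_sym ik.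
by rewrite hornerXsubC subrr mul0r mulr0.
Qed.

Lemma lagrange_interpE (p : {poly F}) : (size p <= #|A|)%N ->
  lagrange_interp (fun i => p.[x i]) = p :> {poly F}.
Proof.
move=> size_p; apply: subr0_eq.
apply: (@roots_geq_poly_eq0 _ _ [seq x i | i <- enum A]).
- apply/allP => t /mapP[i]; rewrite mem_enum => Ai ->.
  by rewrite /root hornerD hornerN horner_lagrange_interp // subrr.
- by rewrite map_inj_in_uniq ?enum_uniq // => i j; rewrite !mem_enum; apply: x_inj.
- rewrite size_map -cardE; apply: leq_trans (size_polyD _ _) _.
  by rewrite size_polyN geq_max size_lagrange_interp.
Qed.

End LagrangeInterpolation.

Lemma polydot_exponent_lt m n i j k : (i < m)%N -> (j < n)%N -> (k < n)%N ->
  (n * i + j + (n - 1 - k) < m * n + n - 1)%N.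
Proof. nia. Qed.

Lemma polydot_exponent_diag n i j k i0 : (j < n)%N -> (k < n)%N ->
  (n * i + j + (n - 1 - k) == n * i0 + (n - 1))%N = (i == i0) && (j == k).
Proof.
move=> jn kn; have [lt_ii0|lt_i0i|->] := ltngtP i i0; last lia.
- have : (n * i.+1 <= n * i0)%N by rewrite leq_mul2l lt_ii0 orbT.
  by rewrite mulnS; lia.
- have : (n * i0.+1 <= n * i)%N by rewrite leq_mul2l lt_i0i orbT.
  by rewrite mulnS; lia.
Qed.

Section PolyDotPolynomial.
Variables (R : comNzRingType) (m n N1 N0 : nat).
Implicit Types (W : 'M[R]_(N1, N0)) (x : 'cV[R]_N0).

Definition polydot_poly W x (r : nat) : {poly R} :=
  \sum_(i < m) \sum_(j < n) \sum_(k < n)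
    (\sum_(c < N0 %/ n) Wblock m n W i j r c * xblock n x k c)
      *: 'X^(n * i + j + (n - 1 - k)).

Lemma node_out_horner W x t (r : 'I_(N1 %/ m)) :
  node_out m n W x t r 0 = (polydot_poly W x r).[t].
Proof.
rewrite /node_out /polydot_poly !mxE horner_sum.
under eq_bigr do rewrite !mxE big_distrl /=.
rewrite exchange_big /=; apply: eq_bigr => i _; rewrite horner_sum.
under eq_bigr do rewrite big_distrl /=.
rewrite exchange_big /=; apply: eq_bigr => j _; rewrite horner_sum.
under eq_bigr do rewrite big_distrr /=.
rewrite exchange_big /=; apply: eq_bigr => k _.
rewrite hornerZ hornerXn big_distrl /=; apply: eq_bigr => c _.
by rewrite !exprD exprM; ring.
Qed.

Lemma size_polydot_poly W x r : (size (polydot_poly W x r) <= m * n + n - 1)%N.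
Proof.
apply/leq_sizeP => d le_d; rewrite !coef_sum.
apply: big1 => i _; rewrite coef_sum; apply: big1 => j _; rewrite coef_sum.
apply: big1 => k _; rewrite coefZ coefXn.
have := polydot_exponent_lt (ltn_ord i) (ltn_ord j) (ltn_ord k).
by case: eqP => [<-|_]; rewrite ?mulr0 // ltnNge le_d.
Qed.

Lemma coef_polydot_poly_diag W x r i0 : (i0 < m)%N ->
  (polydot_poly W x r)`_(n * i0 + (n - 1)) =
  \sum_(j < n) \sum_(c < N0 %/ n) Wblock m n W i0 j r c * xblock n x j c.
Proof.
move=> lt_i0m; rewrite coef_sum (bigD1 (Ordinal lt_i0m)) //= [X in _ + X]big1.
  rewrite addr0 coef_sum; apply: eq_bigr => j _.
  rewrite coef_sum (bigD1 j) //= [X in _ + X]big1 => [|k kj].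
    by rewrite addr0 coefZ coefXn eq_sym polydot_exponent_diag // !eqxx mulr1.
  rewrite coefZ coefXn eq_sym polydot_exponent_diag // eqxx /=.
  by move: kj; rewrite -val_eqE eq_sym => /negbTE->; rewrite mulr0.
move=> i ii0; rewrite coef_sum; apply: big1 => j _; rewrite coef_sum.
apply: big1 => k _; rewrite coefZ coefXn eq_sym polydot_exponent_diag //.
by move: ii0; rewrite -val_eqE /= => /negbTE->; rewrite mulr0.
Qed.

End PolyDotPolynomial.

Lemma sum_nat_blocks (V : nmodType) (n q : nat) (F : nat -> V) :
  \sum_(0 <= l < n * q) F l = \sum_(j < n) \sum_(c < q) F (j * q + c)%N.
Proof.
rewrite big_nat_mul big_mkord; apply: eq_bigr => j _.
by rewrite -{1}[(j * q)%N]add0n big_addn mulSn addnK big_mkord; under eq_bigr do rewrite addnC.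
Qed.

Section BlockProduct.
Variables (R : nzRingType) (m n N1 N0 : nat).

Lemma matE_ord (A : 'M[R]_(N1, N0)) (i : 'I_N1) (j : 'I_N0) : matE A i j = A i j.
Proof. by rewrite /matE !valK. Qed.

Lemma vecE_ord (v : 'cV[R]_N0) (j : 'I_N0) : vecE v j = v j 0.
Proof. by rewrite /vecE valK. Qed.

Lemma mulmx_blockE (W : 'M[R]_(N1, N0)) (x : 'cV[R]_N0) (k : 'I_N1) :
  (n %| N0)%N ->
  (W *m x) k 0 = \sum_(j < n) \sum_(c < N0 %/ n)
    Wblock m n W (k %/ (N1 %/ m)) j (k %% (N1 %/ m)) c * xblock n x j c.
Proof.
move=> dvd_n_N0; rewrite /Wblock /xblock -divn_eq mxE.
rewrite (eq_bigr (fun l : 'I_N0 => matE W k l * vecE x l)) => [|l _]; last first.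
  by rewrite matE_ord vecE_ord.
rewrite -(big_mkord xpredT (fun l => matE W k l * vecE x l)).
by rewrite -{1}(divnK dvd_n_N0) (mulnC (N0 %/ n)%N) sum_nat_blocks.
Qed.

End BlockProduct.

Definition polydot_decoder (F : fieldType) (m n N1 P : nat) (S : {set 'I_P})
  (b : 'I_P -> F) (g : 'I_P -> 'cV[F]_(N1 %/ m)) : 'cV[F]_N1 :=
  \col_(k < N1) (lagrange_interp S b (fun p => vecE (g p) (k %% (N1 %/ m))))
                  `_(n * (k %/ (N1 %/ m)) + (n - 1)).

Theorem theorem1 (R : realFieldType) (m n P N1 N0 : nat)
  (hm : (0 < m)%N) (hn : (0 < n)%N) (hP : (m * n + n - 1 <= P)%N)
  (hN1 : (0 < N1)%N) (hN0 : (0 < N0)%N)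
  (d1 : (m %| N1)%N) (d0 : (n %| N0)%N)
  (b : 'I_P -> R) (hb : injective b)
  (S : {set 'I_P}) (hS : (m * n + n - 1 <= #|S|)%N) :
  exists dec : ('I_P -> 'cV[R]_(N1 %/ m)) -> 'cV[R]_N1,
    forall (W : 'M[R]_(N1, N0)) (x : 'cV[R]_N0),
      dec (fun p => if p \in S then node_out m n W x (b p) else 0) = W *m x.
Proof.
exists (polydot_decoder n S b) => W x; apply/matrixP => k c.
rewrite ord1 {c} (mulmx_blockE m _ _ _ d0) /polydot_decoder mxE.
have q_gt0 : (0 < N1 %/ m)%N by rewrite divn_gt0 // dvdn_leq.
have lt_r : (k %% (N1 %/ m) < N1 %/ m)%N by rewrite ltn_pmod.
have lt_i : (k %/ (N1 %/ m) < m)%N by rewrite ltn_divLR // mulnC divnK.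
rewrite -(coef_polydot_poly_diag n W x _ lt_i).
rewrite -[polydot_poly _ _ _ _ _](@lagrange_interpE _ _ S b (in2W hb)); last first.
  exact: leq_trans (size_polydot_poly m n W x _) hS.
congr (polyseq _)`_ _; apply: eq_lagrange_interp => p pS.
by rewrite pS (vecE_ord _ (Ordinal lt_r)) node_out_horner.
Qed.
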